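(* Let $P_{00},P_{01},P_{10},P_{11}$ be strictly positive random variables on a probability space, and set $P_0=P_{00}+P_{01}$, $P_1=P_{10}+P_{11}$, $$\Lambda_1=\ln\frac{P_0}{P_1},\qquad \Lambda_2=\ln\frac{P_{00}}{P_{01}},\qquad \alpha=\frac{\min\{P_{10},P_{11}\}}{P_1}.$$ Let $\mathcal C$ be the event that $P_{00}$ is at least the second largest element of the multiset $\{P_{00},P_{01},P_{10},P_{11}\}$. Then $$\Pr(\mathcal C)\ \le\ \Pr(\Lambda_1\ge 0,\ \Lambda_2\ge 0)\ +\ \Pr\!\big(\Lambda_1\ge 0,\ -\ln(2e^{\Lambda_1}-1)\le \Lambda_2<0\big)\ +\ \Pr(\ln\alpha\le \Lambda_1<0).$$
   Context: This is the list-size-$L=2$ case of the analysis of SCL decoding of polar codes. There, for an information-bit index $k$, $P_{v_{k-1}v_k}=P(v_{k-1}\mid \mathbf y,\mathbf 0_1^{k-2})\,P(v_k\mid \mathbf y,\mathbf 0_1^{k-2},v_{k-1})$ is the posterior path metric of the extension $(v_{k-1},v_k)$ of the all-zero prefix, $\Lambda_1=\mathsf L_{k-1}$ and $\Lambda_2=\mathsf L_k$ are the log-likelihood ratios of information bits $k-1$ and $k$ given that all previous information bits are $0$, and $\mathcal C=\mathcal C_k$ is the event that the correct all-zero path survives in the list of size $2$ at step $k$ given that the list at step $k-1$ consists of the two extensions of the all-zero prefix. Note $2e^{\Lambda_1}-1\ge 1$ on $\{\Lambda_1\ge0\}$, so the logarithm is well defined there. *)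

From HB Require Import structures.
From mathcomp Require Import all_boot all_order all_algebra.
From mathcomp Require Import all_classical all_reals all_analysis.
Set Implicit Arguments. Unset Strict Implicit. Unset Printing Implicit Defensive.
Import Order.TTheory GRing.Theory Num.Theory.
Local Open Scope ring_scope.

Definition second_largest (R : realDomainType) (a b c d : R) : R :=
  nth 0 (sort (fun x y : R => y <= x) [:: a; b; c; d]) 1.

From HB Require Import structures.
From mathcomp Require Import all_boot all_order all_algebra.
From mathcomp Require Import all_classical all_reals all_analysis.
From mathcomp Require Import lra measurable_realfun.
Import Order.TTheory GRing.Theory Num.Theory.
Local Open Scope ring_scope.
Local Open Scope classical_set_scope.

(* Write a, b, c, e for P00, P01, P10, P11 at a sample point.
   1. The event C is a purely combinatorial condition: a is at least the
      second largest of {a, b, c, e} iff a dominates at least two of b, c, e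
      ([second_largest_le]).
   2. Pointwise, C forces one of the three events of the bound
      ([survivor_cases]):
      - if a + b >= c + e (L1 >= 0) and b <= a, then L2 >= 0;
      - if a + b >= c + e and a < b, then a dominates both c and e, so
        c + e <= 2a, which is exactly L2 >= -ln(2 e^L1 - 1) ([threshold_le]);
      - if a + b < c + e (L1 < 0), a dominates one of c, e, hence
        min(c, e) <= a + b, i.e. ln alpha <= L1 ([ln_min_ratio_le]).
   3. All events involved are measurable (they are defined by comparisons of
      measurable functions), so monotonicity and subadditivity of the
      probability ([le_measure_cover3]) turn the pointwise inclusion into the
      claimed inequality. *)

Lemma second_largest_le (R : realDomainType) (a b c e : R) :
  (second_largest a b c e <= a) =
  [|| (b <= a) && (c <= a), (b <= a) && (e <= a) | (c <= a) && (e <= a)].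
Proof.
rewrite /second_largest /sort /=.
repeat (case: ifP => /=; let H := fresh "H" in move=> H;
  try (move/negbT: H; rewrite -ltNge => H)).
all: repeat (case: leP => ? /=); try done; exfalso; lra.
Qed.

(* The threshold of the second event: with r = (a+b)/s, the inequality
   -ln(2r - 1) <= ln(a/b) is equivalent to s <= 2a. *)
Lemma threshold_le (R : realType) (a b s : R) :
  0 < a -> 0 < b -> 0 < s -> s <= 2 * a ->
  - ln (2 * expR (ln ((a + b) / s)) - 1) <= ln (a / b).
Proof.
move=> a0 b0 s0 s2a.
have ab_pos : 0 < a + b by lra.
rewrite lnK ?posrE ?divr_gt0 //.
have -> : 2 * ((a + b) / s) - 1 = (2 * (a + b) - s) / s.
  by rewrite mulrBl divff ?gt_eqF // mulrA.
have num_pos : 0 < 2 * (a + b) - s by lra.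
rewrite lerNl -lnV ?posrE ?divr_gt0 // invf_div.
rewrite ler_ln ?posrE ?divr_gt0 // ler_pdivrMr // mulrAC ler_pdivlMr //.
nra.
Qed.

Lemma ln_min_ratio_le (R : realType) (a b c e : R) :
  0 < a + b -> 0 < c -> 0 < e -> Num.min c e <= a + b ->
  ln (Num.min c e / (c + e)) <= ln ((a + b) / (c + e)).
Proof.
move=> ab0 c0 e0 hmin; have ce0 : 0 < c + e by lra.
rewrite ler_ln ?posrE ?divr_gt0 ?lt_min ?c0 ?e0 //.
by rewrite ler_pM2r ?invr_gt0.
Qed.

Lemma ln_ratio_ge0 (R : realType) (x y : R) : 0 < y -> y <= x -> 0 <= ln (x / y).
Proof. by move=> y0 yx; apply: ln_ge0; rewrite ler_pdivlMr // mul1r. Qed.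

Lemma ln_ratio_lt0 (R : realType) (x y : R) : 0 < x -> x < y -> ln (x / y) < 0.
Proof.
move=> x0 xy; apply: ln_lt0; rewrite divr_gt0 //=; last lra.
by rewrite ltr_pdivrMr ?mul1r //; lra.
Qed.

Lemma survivor_cases (R : realType) (a b c e : R) :
  0 < a -> 0 < b -> 0 < c -> 0 < e -> second_largest a b c e <= a ->
  let L1 := ln ((a + b) / (c + e)) in let L2 := ln (a / b) in
  ((0 <= L1 /\ 0 <= L2) \/
   (0 <= L1 /\ - ln (2 * expR L1 - 1) <= L2 /\ L2 < 0)) \/
  (ln (Num.min c e / (c + e)) <= L1 /\ L1 < 0).
Proof.
move=> a0 b0 c0 e0; rewrite second_largest_le => hC L1 L2.
have [P1_le|P0_lt] := leP (c + e) (a + b).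
  have L1_ge0 : 0 <= L1 by apply: ln_ratio_ge0 => //; lra.
  have [ba|ab] := leP b a; first by left; left; split=> //; exact: ln_ratio_ge0.
  have [ca ea] : c <= a /\ e <= a.
    by move: hC; rewrite leNgt ab /=; case/andP.
  left; right; split=> //; split; last exact: ln_ratio_lt0.
  by apply: threshold_le => //; lra.
right; split; last by apply: ln_ratio_lt0 => //; lra.
apply: ln_min_ratio_le => //; first lra.
by rewrite ge_min; case/or3P: hC => /andP[? ?]; apply/orP; [left|right|left]; lra.
Qed.

Lemma le_measure_cover3 (R : realFieldType) d (T : ringOfSetsType d)
    (mu : {content set T -> \bar R}) (A B1 B2 B3 : set T) :
  measurable A -> measurable B1 -> measurable B2 -> measurable B3 ->
  A `<=` B1 `|` B2 `|` B3 -> (mu A <= mu B1 + mu B2 + mu B3)%E.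
Proof.
move=> mA m1 m2 m3 AB.
have m12 : measurable (B1 `|` B2) by exact: measurableU.
apply: (le_trans (le_measure _ _ _ AB)); rewrite ?inE //; first exact: measurableU.
apply: (le_trans (measureU2 _ _ _)) => //.
by rewrite leeD2r // measureU2.
Qed.

Section measurable_events.
Context d (T : measurableType d) (R : realType).
Implicit Types f g : T -> R.

Lemma measurable_test (h : T -> bool) :
  measurable_fun setT h -> measurable [set x | h x].
Proof. by move=> mh; have := mh measurableT [set true] I; rewrite setTI. Qed.

Lemma measurable_ln_ratio f g : measurable_fun setT f -> measurable_fun setT g ->
  (forall x, 0 < f x) -> (forall x, 0 < g x) ->
  measurable_fun setT (fun x => ln (f x / g x)).
Proof.
move=> mf mg f0 g0.
rewrite (_ : (fun x => _) = (fun x => ln (f x) - ln (g x))).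
  by apply: measurable_funB; exact: measurableT_comp.
by apply/funext => x; rewrite lnM ?lnV ?posrE ?invr_gt0.
Qed.

End measurable_events.

Theorem proposition2 (R : realType) (d : measure_display) (T : measurableType d)
  (P : probability T R) (P00 P01 P10 P11 : T -> R)
  (m00 : measurable_fun setT P00) (m01 : measurable_fun setT P01)
  (m10 : measurable_fun setT P10) (m11 : measurable_fun setT P11)
  (h00 : forall x, 0 < P00 x) (h01 : forall x, 0 < P01 x)
  (h10 : forall x, 0 < P10 x) (h11 : forall x, 0 < P11 x) :
  let P0 := fun x => P00 x + P01 x in
  let P1 := fun x => P10 x + P11 x in
  let L1 := fun x => ln (P0 x / P1 x) in
  let L2 := fun x => ln (P00 x / P01 x) in
  let alpha := fun x => Num.min (P10 x) (P11 x) / P1 x in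
  (P [set x | second_largest (P00 x) (P01 x) (P10 x) (P11 x) <= P00 x]%R
   <= P [set x | 0 <= L1 x /\ 0 <= L2 x]%R
      + P [set x | 0 <= L1 x /\ - ln (2 * expR (L1 x) - 1) <= L2 x /\ L2 x < 0]%R
      + P [set x | ln (alpha x) <= L1 x /\ L1 x < 0]%R)%E.
Proof.
cbv zeta.
have P1_pos x : 0 < P10 x + P11 x by apply: addr_gt0.
have mP1 : measurable_fun setT (fun x => P10 x + P11 x) by exact: measurable_funD.
have mL1 : measurable_fun setT (fun x => ln ((P00 x + P01 x) / (P10 x + P11 x))).
  apply: measurable_ln_ratio => //; first exact: measurable_funD.
  by move=> x; apply: addr_gt0.
have mL2 : measurable_fun setT (fun x => ln (P00 x / P01 x)).
  exact: measurable_ln_ratio.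
have mln_alpha : measurable_fun setT
    (fun x => ln (Num.min (P10 x) (P11 x) / (P10 x + P11 x))).
  apply: measurable_ln_ratio => //; first exact: measurable_minr.
  by move=> x; rewrite lt_min h10 h11.
have mthreshold : measurable_fun setT
    (fun x => - ln (2 * expR (ln ((P00 x + P01 x) / (P10 x + P11 x))) - 1)).
  apply: measurableT_comp => //; apply: measurableT_comp => //.
  by apply: measurable_funB => //; apply: measurable_funM => //;
    exact: measurableT_comp.
apply: le_measure_cover3.
- under eq_set do rewrite second_largest_le.
  by apply: measurable_test; apply: measurable_or; [|apply: measurable_or];
    apply: measurable_and; apply: measurable_fun_ler.
- by apply: measurableI; apply: measurable_test; apply: measurable_fun_ler.
- by apply: measurableI; [|apply: measurableI]; apply: measurable_test;
    [apply: measurable_fun_ler..|apply: measurable_fun_ltr].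
- by apply: measurableI; apply: measurable_test;
    [apply: measurable_fun_ler|apply: measurable_fun_ltr].
- by move=> x /survivor_cases; apply.
Qed.
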